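(* Let $\mathfrak{B}$ be a linear time-invariant behavior with signal space $\mathbb{R}^{\mathrm{w}}$ whose restriction to the interval $[k-L^-,k+L^+]$ (with $L^-+L^++1=L$) is represented as $\hat{w}_{[k-L^-,k+L^+]}=\mathcal{F} z_k$ for a matrix $\mathcal{F}$ and arbitrary vector $z_k$. Let $\mathfrak{B}_{sV}$ be the dissipative behavior with manifest variable $(s,V)$ described by $V(k)-V(k-1)\leq s(k)$ for all $k$, with $V\geq 0$, and let the interconnection between $\mathfrak{B}$ and $\mathfrak{B}_{sV}$ be given by the quadratic difference forms $s(k)=Q_\Phi(w)(k)$, $V(k)=Q_\Psi(w)(k)$ of orders $K_\Phi$ and $K_\Psi$ with symmetric coefficient matrices $\widetilde{\Phi}$ and $\widetilde{\Psi}$. Assume that $L^-=\max\{K_\Phi,K_\Psi+1\}$. If $L^->\mathtt{L}(\mathfrak{B})$ (the lag of $\mathfrak{B}$), $\widetilde{\Psi}\geq0$ and, for all $l\in\{0,1,\ldots,L^+\}$, $$z_k^\top\mathcal{F}_l^\top (\widehat{\Phi}-\nabla\widehat{\Psi})\mathcal{F}_lz_k\geq0$$ holds for any $z_k$, where $\mathcal{F}_l$ denotes the sub-matrix of $\mathcal{F}$ corresponding to the trajectory segment $\hat{w}_{[k-L^-+l,k+l]}$, then $\mathfrak{B}=\pi_{w}(\mathfrak{B}_{ps})$, where $\mathfrak{B}_{ps}=(\mathfrak{B}\times\mathfrak{B}_{sV})\cap\mathfrak{B}_{s}^\Pi$. In other words, $\mathfrak{B}$ is $(Q_\Phi(w),Q_\Psi(w))$-dissipative.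 Furthermore, if $L^+=0$, then the family of inequalities $z_k^\top\mathcal{F}_l^\top (\widehat{\Phi}-\nabla\widehat{\Psi})\mathcal{F}_lz_k\geq0$ reduces to the single linear matrix inequality $$\mathcal{F}^\top (\widehat{\Phi}-\nabla\widehat{\Psi})\mathcal{F}\geq0.$$
   Context: Discrete time axis $\mathbb{T}\subset\mathbb{Z}^{\geq0}$. A dynamical system is a triple $(\mathbb{T},\mathbb{W},\mathfrak{B})$ with behavior $\mathfrak{B}\subset\mathbb{W}^{\mathbb{T}}$; $\hat{w}_{[a,b]}=\mathrm{col}(w(a),\ldots,w(b))$ and $\mathfrak{B}_{|[a,b]}$ is the behavior restricted to $[a,b]$. The lag $\mathtt{L}(\mathfrak{B})$ is the smallest integer such that $w_{|[k,k+\mathtt{L}(\mathfrak{B})]}\in\mathfrak{B}_{|[k,k+\mathtt{L}(\mathfrak{B})]}$ for all $k$ implies $w\in\mathfrak{B}$. $\pi_w$ denotes projection of a behavior onto the variable $w$. A quadratic difference form (QdF) of order $K_\Phi$ is $Q_\Phi(w)(k)=\hat{w}_{[k-K_\Phi,k]}^\top\widetilde{\Phi}\hat{w}_{[k-K_\Phi,k]}$ with symmetric $\widetilde{\Phi}$. The rate of change of storage $Q_{\nabla\Psi}(w)(k)=Q_\Psi(w)(k)-Q_\Psi(w)(k-1)$ has coefficient matrix $\nabla\widetilde{\Psi}=\mathrm{diag}(0_{\mathrm{w}},\widetilde{\Psi})-\mathrm{diag}(\widetilde{\Psi},0_{\mathrm{w}})$. Here $\widehat{\Phi}=\mathrm{diag}(0_{k_\Phi\mathrm{w}},\widetilde{\Phi})$,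 $\nabla\widehat{\Psi}=\mathrm{diag}(0_{k_\Psi\mathrm{w}},\nabla\widetilde{\Psi})$, $k_\Phi=L^--K_\Phi$, $k_\Psi=L^--K_\Psi-1$. $\mathfrak{B}_s^\Pi$ is the (virtual) interconnection behavior on $(w,s,V)$ defined by $s=Q_\Phi(w)$, $V=Q_\Psi(w)$. *)

(* Discrete time axis T = nat (= Z_{>=0}). *)
From HB Require Import structures.
From mathcomp Require Import all_boot all_order all_algebra.
Set Implicit Arguments. Unset Strict Implicit. Unset Printing Implicit Defensive.
Import Order.TTheory GRing.Theory Num.Theory.
Local Open Scope ring_scope.

Section Defs.
Variable R : realFieldType.
Variable wd : nat.

Definition signal := nat -> 'cV[R]_wd.
Definition behavior := signal -> Prop.

(* win w a n = col(w(a), w(a+1), ..., w(a+n-1)) = \hat w_{[a, a+n-1]} *)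
Definition win (w : signal) (a n : nat) : 'cV[R]_(n * wd) :=
  (mxvec (\matrix_(i < n, j < wd) w (a + i)%N j ord0))^T.

Unset Implicit Arguments.
Definition restr (B : behavior) (a n : nat) : 'cV[R]_(n * wd) -> Prop :=
  fun v => exists w, B w /\ win w a n = v.
Set Implicit Arguments.

Definition LTI (B : behavior) : Prop :=
  [/\ B (fun _ => 0),
      (forall w1 w2, B w1 -> B w2 -> B (fun k => w1 k + w2 k)),
      (forall (c : R) w, B w -> B (fun k => c *: w k)) &
      (forall w, B w -> B (fun k => w k.+1))].

Definition complete (B : behavior) (l : nat) : Prop :=
  forall w, (forall k, restr B k l.+1 (win w k l.+1)) -> B w.
Definition is_lag (B : behavior) (l : nat) : Prop :=
  complete B l /\ forall l', (l' < l)%N -> ~ complete B l'.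

Definition qform n (A : 'M[R]_n) (x : 'cV[R]_n) : R := (x^T *m A *m x) 0 0.

(* QdF of order K: Q_Phi(w)(k) = \hat w_{[k-K,k]}^T Phi \hat w_{[k-K,k]}
   (meaningful for k >= K) *)
Definition QdF K (Phi : 'M[R]_(K.+1 * wd)) (w : signal) (k : nat) : R :=
  qform Phi (win w (k - K) K.+1).

(* diag(0, A) of size n (A in the bottom-right corner), assuming p <= n *)
Definition padBR n p (A : 'M[R]_p) : 'M[R]_n :=
  \matrix_(i < n, j < n)
    match (insub (i - (n - p))%N : option 'I_p), (insub (j - (n - p))%N : option 'I_p) with
    | Some i', Some j' => if ((n - p <= i) && (n - p <= j))%N then A i' j' else 0
    | _, _ => 0
    end.

(* diag(A, 0) of size n (A in the top-left corner), assuming p <= n *)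
Definition padTL n p (A : 'M[R]_p) : 'M[R]_n :=
  \matrix_(i < n, j < n)
    match (insub (i : nat) : option 'I_p), (insub (j : nat) : option 'I_p) with
    | Some i', Some j' => A i' j'
    | _, _ => 0
    end.

Definition nablaPsi K (Psi : 'M[R]_(K.+1 * wd)) : 'M[R]_(K.+2 * wd) :=
  padBR (K.+2 * wd) Psi - padTL (K.+2 * wd) Psi.

Definition hatPhi Lm K (Phi : 'M[R]_(K.+1 * wd)) : 'M[R]_(Lm.+1 * wd) :=
  padBR (Lm.+1 * wd) Phi.
Definition hatNablaPsi Lm K (Psi : 'M[R]_(K.+1 * wd)) : 'M[R]_(Lm.+1 * wd) :=
  padBR (Lm.+1 * wd) (nablaPsi Psi).

(* F_l : rows of F corresponding to the segment \hat w_{[k-L^-+l, k+l]} *)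
Definition Fsub L nz Lm (l : nat) (F : 'M[R]_(L * wd, nz)) : 'M[R]_(Lm.+1 * wd, nz) :=
  \matrix_(i < Lm.+1 * wd, j < nz)
    match (insub (l * wd + i)%N : option 'I_(L * wd)) with
    | Some i' => F i' j
    | None => 0
    end.

Definition BsV (s V : nat -> R) : Prop :=
  (forall k, (0 < k)%N -> V k - V k.-1 <= s k) /\ (forall k, 0 <= V k).

(* B_s^Pi : s = Q_Phi(w), V = Q_Psi(w) (wherever the QdFs are defined) *)
Definition BsPi KPhi KPsi (Phi : 'M[R]_(KPhi.+1 * wd)) (Psi : 'M[R]_(KPsi.+1 * wd))
  (w : signal) (s V : nat -> R) : Prop :=
  (forall k, (KPhi <= k)%N -> s k = QdF Phi w k) /\
  (forall k, (KPsi <= k)%N -> V k = QdF Psi w k).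

Definition Bps (B : behavior) KPhi KPsi (Phi : 'M[R]_(KPhi.+1 * wd))
  (Psi : 'M[R]_(KPsi.+1 * wd)) (w : signal) (s V : nat -> R) : Prop :=
  [/\ B w, BsV s V & BsPi Phi Psi w s V].
Definition proj_w (P : signal -> (nat -> R) -> (nat -> R) -> Prop) (w : signal) : Prop :=
  exists s V, P w s V.

End Defs.
Arguments restr {R wd} B a n.

Definition psd (R : realFieldType) n (A : 'M[R]_n) : Prop :=
  A^T = A /\ forall x, 0 <= qform A x.

From HB Require Import structures.
From mathcomp Require Import all_boot all_order all_algebra.
From mathcomp Require Import zify.
Set Implicit Arguments. Unset Strict Implicit. Unset Printing Implicit Defensive.
Import Order.TTheory GRing.Theory Num.Theory.
Local Open Scope ring_scope.

(* Every window of a trajectory of B is F_0 z for some z, and on a window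
   [k - L^-, k] the quadratic form of Phi^ - nabla Psi^ evaluates to
   Q_Phi(w)(k) - (Q_Psi(w)(k) - Q_Psi(w)(k-1)).  Hence the inequality for
   l = 0 alone yields the dissipation inequality for all k >= L^-, with the
   nonnegative storage Q_Psi(w).  Before L^- the QdFs are unconstrained, and
   storage and supply are extended by letting the storage decrease faster
   than any early supply value.  When L^+ = 0, F_0 is F itself and
   F^T (Phi^ - nabla Psi^) F is symmetric, which gives the LMI. *)

Section NatIndexedEntries.
Variable R : realFieldType.

(* Entries addressed by natural numbers, with value 0 out of range: windows can
   then be shifted and truncated without casts between ordinal types. *)
Definition cv_at n (x : 'cV[R]_n) (i : nat) : R :=
  if (insub i : option 'I_n) is Some i' then x i' 0 else 0.

Definition mx_at n (A : 'M[R]_n) (i j : nat) : R :=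
  match (insub i : option 'I_n), (insub j : option 'I_n) with
  | Some i', Some j' => A i' j'
  | _, _ => 0
  end.

Definition subcv {p n} (d : nat) (x : 'cV[R]_n) : 'cV[R]_p :=
  \col_(i < p) cv_at x (i + d).

Lemma cv_atE n (x : 'cV[R]_n) (i : 'I_n) : cv_at x i = x i 0.
Proof. by rewrite /cv_at valK. Qed.

Lemma cv_at_subcv p n d (x : 'cV[R]_n) i : (i < p)%N ->
  cv_at (subcv d x : 'cV_p) i = cv_at x (i + d).
Proof. by move=> lt_ip; rewrite -[i]/(val (Ordinal lt_ip)) cv_atE mxE. Qed.

Lemma mx_atE n (A : 'M[R]_n) (i j : 'I_n) : mx_at A i j = A i j.
Proof. by rewrite /mx_at !valK. Qed.

Lemma mx_at_out n (A : 'M[R]_n) i j : (n <= i)%N || (n <= j)%N -> mx_at A i j = 0.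
Proof.
rewrite /mx_at; case: insubP => [i' _ <-|//]; case: insubP => [j' _ <-|//].
by rewrite leqNgt ltn_ord leqNgt ltn_ord.
Qed.

Lemma qform_nat n (A : 'M[R]_n) x :
  qform A x = \sum_(0 <= i < n) \sum_(0 <= j < n) cv_at x i * mx_at A i j * cv_at x j.
Proof.
rewrite /qform mxE big_mkord; under [RHS]eq_bigr => i _ do rewrite big_mkord.
rewrite [RHS]exchange_big; apply: eq_bigr => j _; rewrite mxE big_distrl.
by apply: eq_bigr => i _; rewrite !mxE !cv_atE mx_atE.
Qed.

Lemma qformB n (A B : 'M[R]_n) x : qform (A - B) x = qform A x - qform B x.
Proof. by rewrite /qform mulmxBr mulmxBl !mxE. Qed.

Lemma qform_mulmx n m (F : 'M[R]_(n, m)) (M : 'M_n) z :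
  qform (F^T *m M *m F) z = qform M (F *m z).
Proof. by rewrite /qform trmx_mul !mulmxA. Qed.

Lemma big_nat_window (G : nat -> R) n p d : (d + p <= n)%N ->
  (forall i, (i < n)%N -> ~~ (d <= i < d + p)%N -> G i = 0) ->
  \sum_(0 <= i < n) G i = \sum_(0 <= i < p) G (i + d)%N.
Proof.
move=> dpn G0; rewrite (@big_cat_nat _ _ _ d) ?(leq_trans (leq_addr p d)) //=.
rewrite [X in _ + X](@big_cat_nat _ _ _ (d + p)) ?leq_addr //=.
have -> : \sum_(d <= i < d + p) G i = \sum_(0 <= i < p) G (i + d)%N.
  by rewrite -{1}[d]add0n big_addn addKn.
rewrite big1_seq ?add0r => [|i]; last first.
  by rewrite mem_index_iota => /andP[_ /andP[_ lt_id]]; rewrite G0 //; lia.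
rewrite [X in _ + X]big1_seq ?addr0 // => i.
by rewrite mem_index_iota => /andP[_ /andP[le_i lt_in]]; rewrite G0 //; lia.
Qed.

Lemma qform_embed n p d (M : 'M[R]_n) (A : 'M[R]_p) (x : 'cV_n) : (d + p <= n)%N ->
  (forall i j, (i < n)%N -> (j < n)%N ->
     mx_at M i j = if ((d <= i) && (d <= j))%N then mx_at A (i - d) (j - d) else 0) ->
  qform M x = qform A (subcv d x).
Proof.
move=> dpn MA; have M0 i j : (i < n)%N -> (j < n)%N -> ~~ (d <= i < d + p)%N ->
    mx_at M i j = 0.
  move=> lt_in lt_jn out_i; rewrite MA //; case: ifP => // /andP[le_di _].
  by rewrite mx_at_out //; lia.
rewrite !qform_nat (big_nat_window dpn) => [|i lt_in out_i]; last first.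
  apply: big1_seq => j; rewrite mem_index_iota => /andP[_ /andP[_ lt_jn]].
  by rewrite M0 // mulr0 mul0r.
apply: eq_big_nat => i /andP[_ lt_ip]; rewrite (big_nat_window dpn) => [|j lt_jn out_j].
  apply: eq_big_nat => j /andP[_ lt_jp].
  rewrite MA; [|lia|lia].
  by rewrite !leq_addl !addnK !cv_at_subcv.
rewrite MA; [|lia|lia].
case: ifP => [/andP[_ le_dj]|_]; last by rewrite mulr0 mul0r.
by rewrite mx_at_out ?mulr0 ?mul0r //; lia.
Qed.

Lemma mx_at_padBR n p (A : 'M[R]_p) i j : (i < n)%N -> (j < n)%N ->
  mx_at (padBR n A) i j =
  if ((n - p <= i) && (n - p <= j))%N then mx_at A (i - (n - p)) (j - (n - p)) else 0.
Proof.
move=> lt_in lt_jn; rewrite -[i]/(val (Ordinal lt_in)) -[j]/(val (Ordinal lt_jn)) mx_atE mxE.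
rewrite /mx_at /=; case: (@insub _ _ 'I_p (i - (n - p))%N) => [a|];
  by case: (@insub _ _ 'I_p (j - (n - p))%N) => [b|]; case: ifP.
Qed.

Lemma qform_padBR n p (A : 'M[R]_p) (x : 'cV_n) : (p <= n)%N ->
  qform (padBR n A) x = qform A (subcv (n - p) x).
Proof. by move=> le_pn; apply: qform_embed => [|i j]; [rewrite subnK | exact: mx_at_padBR]. Qed.

Lemma qform_padTL n p (A : 'M[R]_p) (x : 'cV_n) : (p <= n)%N ->
  qform (padTL n A) x = qform A (subcv 0 x).
Proof.
move=> le_pn; apply: qform_embed => // i j lt_in lt_jn.
by rewrite -[i]/(val (Ordinal lt_in)) -[j]/(val (Ordinal lt_jn)) mx_atE mxE !subn0.
Qed.

Lemma tr_padBR n p (A : 'M[R]_p) : (padBR n A)^T = padBR n A^T.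
Proof.
apply/matrixP => i j; rewrite !mxE andbC.
by case: insub => [a|]; case: insub => [b|] //; rewrite mxE.
Qed.

Lemma tr_padTL n p (A : 'M[R]_p) : (padTL n A)^T = padTL n A^T.
Proof.
apply/matrixP => i j; rewrite !mxE.
by case: insub => [a|]; case: insub => [b|] //; rewrite mxE.
Qed.

End NatIndexedEntries.

Lemma index_allpairs (S T : eqType) (s : seq S) (t : seq T) x y :
  x \in s -> y \in t ->
  index (x, y) [seq (a, b) | a <- s, b <- t] = (index x s * size t + index y t)%N.
Proof.
elim: s => [|a s IHs] // s_x t_y; rewrite allpairs_cons index_cat /=.
have [<-|neq_ax] := eqVneq a x; first by rewrite map_f // index_map // => ? ? [].
have /negbTE-> : (x, y) \notin [seq (a, b) | b <- t].
  by apply/mapP => -[b _ [eq_ax _]]; rewrite eq_ax eqxx in neq_ax.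
by rewrite size_map IHs ?mulSn ?addnA //; move: s_x; rewrite inE eq_sym (negbTE neq_ax).
Qed.

Lemma val_enum_rank (T : finType) (x : T) : val (enum_rank x) = index x (enum T).
Proof. by rewrite -{2}(nth_enum_rank x x) index_uniq // ?enum_uniq // -cardE ltn_ord. Qed.

Lemma mxvec_indexE m n (i : 'I_m) (j : 'I_n) : val (mxvec_index i j) = (i * n + j)%N.
Proof.
rewrite /mxvec_index /= val_enum_rank.
have -> : enum {: 'I_m * 'I_n} = prod_enum 'I_m 'I_n by rewrite enumT unlock.
by rewrite /prod_enum index_allpairs ?mem_enum // !index_enum_ord size_enum_ord.
Qed.

Section Windows.
Variables (R : realFieldType) (wd : nat).
Implicit Type w : signal R wd.

Lemma cv_at_win w a N (i : 'I_N) (j : 'I_wd) :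
  cv_at (win w a N) (i * wd + j) = w (a + i)%N j 0.
Proof. by rewrite -(mxvec_indexE i j) cv_atE /win mxE mxvecE mxE. Qed.

Lemma subcv_win w a N P d : (d + P <= N)%N ->
  subcv (d * wd) (win w a N) = win w (a + d) P.
Proof.
move=> le_dPN; apply/colP => k; rewrite mxE; case/mxvec_indexP: k => i j.
have lt_idN : (i + d < N)%N by rewrite addnC (leq_trans _ le_dPN) ?ltn_add2l.
have -> : (mxvec_index i j + d * wd = Ordinal lt_idN * wd + j)%N.
  by rewrite mxvec_indexE /= mulnDl addnAC.
by rewrite cv_at_win /win mxE mxvecE mxE /= [(i + d)%N]addnC addnA.
Qed.

Lemma Fsub_mulmx L nz Lm l (F : 'M[R]_(L * wd, nz)) z :
  Fsub Lm l F *m z = subcv (l * wd) (F *m z).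
Proof.
apply/colP => i; rewrite !mxE /cv_at [(i + _)%N]addnC.
under eq_bigr do rewrite mxE.
case: (@insub _ _ 'I_(L * wd) (l * wd + i)%N) => [k|]; first by rewrite mxE.
by rewrite big1 // => j _; rewrite mul0r.
Qed.

Lemma castmx_Fsub0 L nz Lm (F : 'M[R]_(L * wd, nz)) (e : (L * wd = Lm.+1 * wd)%N) :
  castmx (e, erefl nz) F = Fsub Lm 0 F.
Proof.
apply/matrixP => i j; rewrite castmxE mxE /= mul0n add0n.
have lt_iL : (i < L * wd)%N by rewrite e.
by rewrite insubT /=; congr (F _ _); apply: val_inj.
Qed.

Lemma qform_padBR_win K N (A : 'M[R]_(K * wd)) w a : (K <= N)%N ->
  qform (padBR (N * wd) A) (win w a N) = qform A (win w (a + (N - K)) K).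
Proof.
by move=> le_KN; rewrite qform_padBR ?leq_mul2r ?le_KN ?orbT // -mulnBl subcv_win ?subnK.
Qed.

Lemma qform_padTL_win K N (A : 'M[R]_(K * wd)) w a : (K <= N)%N ->
  qform (padTL (N * wd) A) (win w a N) = qform A (win w a K).
Proof.
move=> le_KN; rewrite qform_padTL ?leq_mul2r ?le_KN ?orbT //.
by rewrite -(mul0n wd) subcv_win ?addn0.
Qed.

Lemma qform_nablaPsi_win K (Psi : 'M[R]_(K.+1 * wd)) w a :
  qform (nablaPsi Psi) (win w a K.+2) =
  qform Psi (win w a.+1 K.+1) - qform Psi (win w a K.+1).
Proof. by rewrite qformB qform_padBR_win // qform_padTL_win // subSnn addn1. Qed.

End Windows.

Section Dissipation.
Variables (R : realFieldType) (wd Lm KPhi KPsi : nat).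
Variables (Phi : 'M[R]_(KPhi.+1 * wd)) (Psi : 'M[R]_(KPsi.+1 * wd)).

Lemma hat_supply_sym : Phi^T = Phi -> Psi^T = Psi ->
  (hatPhi Lm Phi - hatNablaPsi Lm Psi)^T = hatPhi Lm Phi - hatNablaPsi Lm Psi.
Proof.
move=> sym_Phi sym_Psi; rewrite linearB /= /hatPhi /hatNablaPsi !tr_padBR sym_Phi.
by rewrite /nablaPsi linearB /= tr_padBR tr_padTL sym_Psi.
Qed.

Lemma qform_hat_supply_win w k : (KPhi <= Lm)%N -> (KPsi < Lm)%N -> (Lm <= k)%N ->
  qform (hatPhi Lm Phi - hatNablaPsi Lm Psi) (win w (k - Lm) Lm.+1) =
  QdF Phi w k - (QdF Psi w k - QdF Psi w k.-1).
Proof.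
move=> le_KPhi lt_KPsi le_Lmk.
rewrite qformB qform_padBR_win // qform_padBR_win // qform_nablaPsi_win /QdF.
have -> : (k - Lm + (Lm.+1 - KPhi.+1) = k - KPhi)%N by lia.
have -> : (k - Lm + (Lm.+1 - KPsi.+2) = k.-1 - KPsi)%N by lia.
by have -> : (k.-1 - KPsi).+1 = (k - KPsi)%N by lia.
Qed.

Lemma dissipation_of_window_LMI L nz (F : 'M[R]_(L * wd, nz)) w :
  (Lm < L)%N -> (KPhi <= Lm)%N -> (KPsi < Lm)%N ->
  (forall z, 0 <= qform ((Fsub Lm 0 F)^T *m (hatPhi Lm Phi - hatNablaPsi Lm Psi) *m Fsub Lm 0 F) z) ->
  (forall k, (Lm <= k)%N -> exists z, win w (k - Lm) L = F *m z) ->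
  forall k, (Lm <= k)%N -> QdF Psi w k - QdF Psi w k.-1 <= QdF Phi w k.
Proof.
move=> lt_LmL le_KPhi lt_KPsi LMI0 w_in_imF k le_Lmk.
have [z wF] := w_in_imF k le_Lmk.
have := LMI0 z; rewrite qform_mulmx Fsub_mulmx -wF subcv_win ?addn0 //.
by rewrite qform_hat_supply_win // subr_ge0.
Qed.

End Dissipation.

Lemma storage_extension (R : realFieldType) (p q : nat -> R) (Kp Kq : nat) :
  (forall k, 0 <= q k) ->
  (forall k, (Kp <= k)%N -> (Kq < k)%N -> q k - q k.-1 <= p k) ->
  exists s V, [/\ BsV s V, (forall k, (Kp <= k)%N -> s k = p k)
                 & (forall k, (Kq <= k)%N -> V k = q k)].
Proof.
move=> q_ge0 dissip.
pose c := \sum_(i < Kq.+1) `|p i|.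
have c_ge0 : 0 <= c by rewrite sumr_ge0.
have p_ge : forall k, (k <= Kq)%N -> - c <= p k.
  move=> k le_kKq; have : `|p k| <= c.
    by rewrite /c (bigD1 (Ordinal (le_kKq : (k < Kq.+1)%N))) //= lerDl sumr_ge0.
  by rewrite ler_norml => /andP[].
(* Up to Kq, V decreases by c per step, and c bounds every |p k| with k <= Kq. *)
pose V k := if (Kq <= k)%N then q k else q Kq + c * (Kq - k)%:R.
pose s k := if (Kp <= k)%N then p k else V k - V k.-1.
have VE k : (k <= Kq)%N -> V k = q Kq + c * (Kq - k)%:R.
  rewrite /V; case: ifP => // le_Kqk le_kKq.
  have -> : k = Kq by apply/eqP; rewrite eqn_leq le_kKq le_Kqk.
  by rewrite subnn mulr0 addr0.
exists s, V; split=> [|k|k]; last 2 first.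
- by rewrite /s => ->.
- by rewrite /V => ->.
split=> [k lt0k|k]; last first.
  by rewrite /V; case: ifP => _; rewrite ?addr_ge0 ?mulr_ge0.
rewrite /s; case: ifP => [le_Kpk|_]; last exact: lexx.
have [le_kKq|lt_Kqk] := leqP k Kq.
  rewrite VE // VE; last by lia.
  have -> : (Kq - k.-1 = (Kq - k) + 1)%N by lia.
  by rewrite natrD mulrDr mulr1 addrA opprD addrA subrr sub0r p_ge.
by rewrite /V (ltnW lt_Kqk) (_ : Kq <= k.-1)%N ?dissip //; lia.
Qed.

Unset Implicit Arguments.

Theorem proposition9 (R : realFieldType) (wd nz Lm Lp L KPhi KPsi : nat)
  (B : behavior R wd) (F : 'M[R]_(L * wd, nz))
  (Phi : 'M[R]_(KPhi.+1 * wd)) (Psi : 'M[R]_(KPsi.+1 * wd)) :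
  LTI B ->
  L = (Lm + Lp + 1)%N ->
  (forall k, (Lm <= k)%N ->
     forall v, restr B (k - Lm) L v <-> exists z : 'cV[R]_nz, v = F *m z) ->
  Phi^T = Phi -> Psi^T = Psi ->
  Lm = maxn KPhi KPsi.+1 ->
  (exists l, is_lag B l /\ (l < Lm)%N) ->
  psd Psi ->
  (forall l, (l <= Lp)%N -> forall z : 'cV[R]_nz,
     0 <= qform ((Fsub Lm l F)^T *m (hatPhi Lm Phi - hatNablaPsi Lm Psi) *m Fsub Lm l F) z) ->
  (forall w, B w <-> proj_w (Bps B Phi Psi) w) /\
  (Lp = 0%N -> forall e : (L * wd = Lm.+1 * wd)%N,
     (forall l, (l <= Lp)%N -> forall z : 'cV[R]_nz,
        0 <= qform ((Fsub Lm l F)^T *m (hatPhi Lm Phi - hatNablaPsi Lm Psi) *m Fsub Lm l F) z)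
     <-> psd ((castmx (e, erefl nz) F)^T *m (hatPhi Lm Phi - hatNablaPsi Lm Psi)
                *m castmx (e, erefl nz) F)).
Proof.
move=> _ def_L restrB_imF sym_Phi sym_Psi def_Lm _ [_ Psi_ge0] LMI.
have lt_LmL : (Lm < L)%N by lia.
have le_KPhi : (KPhi <= Lm)%N by lia.
have lt_KPsi : (KPsi < Lm)%N by lia.
split=> [w|Lp0 e].
  split=> [Bw|[s [V [Bw _ _]]]] //.
  have w_in_imF k : (Lm <= k)%N -> exists z, win w (k - Lm) L = F *m z.
    by move=> le_Lmk; apply/(restrB_imF k le_Lmk); exists w.
  have dissip := dissipation_of_window_LMI lt_LmL le_KPhi lt_KPsi (LMI 0%N isT) w_in_imF.
  have [s [V [sV sE VE]]] := @storage_extension _ (QdF Phi w) (QdF Psi w) KPhi KPsi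
    (fun k => Psi_ge0 _) (fun k le_KPhik lt_KPsik => dissip k ltac:(lia)).
  by exists s, V.
rewrite castmx_Fsub0 Lp0; split=> [LMI0 | [_ LMI0] l]; last by rewrite leqn0 => /eqP ->.
split; last exact: LMI0 0%N isT.
by rewrite !trmx_mul trmxK hat_supply_sym // mulmxA.
Qed.
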